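(* Let $d\ge1$, $W\ge2$, $n\ge1$, $\Omega=[0,1]^d$, and let $\Phi:(B_{\ell_\infty^{\tilde n}},\|\cdot\|_{\ell_\infty^{\tilde n}})\to C(\Omega)$ be the ReLU neural network parametrization map of width $W$ and depth $n$ described in the context. Then there is a constant $C'=C'(d)$ depending only on $d$ such that $$\|\Phi(y)-\Phi(y')\|_{C(\Omega)}\le C'nW^n\|y-y'\|_{\ell_\infty^{\tilde n}}\quad\text{for all }y,y'\in B_{\ell_\infty^{\tilde n}}.$$
   Context: Let $\tilde n=W(d+1)+(n-1)W(W+1)+(W+1)$, $\|y\|_{\ell_\infty^{\tilde n}}=\max_i|y_i|$ and $B_{\ell_\infty^{\tilde n}}=\{y\in\mathbb{R}^{\tilde n}:\|y\|_{\ell_\infty^{\tilde n}}\le1\}$. A vector $y\in\mathbb{R}^{\tilde n}$ lists (in a fixed order) the entries of affine maps $A^{(0)}(x)=A_0x+b^{(0)}$ with $A_0\in\mathbb{R}^{W\times d}$, $b^{(0)}\in\mathbb{R}^W$; $A^{(\ell)}(x)=A_\ell x+b^{(\ell)}$ with $A_\ell\in\mathbb{R}^{W\times W}$, $b^{(\ell)}\in\mathbb{R}^W$ for $\ell=1,\dots,n-1$; and $A^{(n)}(x)=A_nx+b^{(n)}$ with $A_n\in\mathbb{R}^{1\times W}$, $b^{(n)}\in\mathbb{R}$. With $\bar\sigma:\mathbb{R}^W\to\mathbb{R}^W$ applying $t\mapsto\max\{t,0\}$ coordinatewise, $\Phi(y)$ is the function $\Omega\to\mathbb{R}$ given by $\Phi(y)=A^{(n)}\circ\bar\sigma\circ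 A^{(n-1)}\circ\cdots\circ\bar\sigma\circ A^{(0)}$. $C(\Omega)$ carries the sup norm. *)

From HB Require Import structures.
From mathcomp Require Import all_boot all_order all_algebra.
From mathcomp Require Import reals.
Set Implicit Arguments. Unset Strict Implicit. Unset Printing Implicit Defensive.
Import Order.TTheory GRing.Theory Num.Theory.
Local Open Scope ring_scope.

Section NN.
Variable R : realType.

(* Parameter vector y of a ReLU network of width W and depth n with input
   dimension d, stored componentwise (the entries of y, in a fixed order):
   A^(0)(x) = A0 x + b0, A^(l)(x) = Ah l x + bh l (l = 1..n-1, indexed by
   'I_n.-1), A^(n)(x) = An x + bn. *)
Record params (d W n : nat) := Params {
  pA0 : 'M[R]_(W, d);
  pb0 : 'cV[R]_W;
  pAh : 'I_n.-1 -> 'M[R]_(W, W);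
  pbh : 'I_n.-1 -> 'cV[R]_W;
  pAn : 'M[R]_(1, W);
  pbn : R }.

Definition mxsup (p q : nat) (A : 'M[R]_(p, q)) : R :=
  \big[Num.max/0]_(i < p) \big[Num.max/0]_(j < q) `|A i j|.

Definition pdist (d W n : nat) (y y' : params d W n) : R :=
  Num.max (mxsup (pA0 y - pA0 y'))
  (Num.max (mxsup (pb0 y - pb0 y'))
  (Num.max (\big[Num.max/0]_(l < n.-1) mxsup (pAh y l - pAh y' l))
  (Num.max (\big[Num.max/0]_(l < n.-1) mxsup (pbh y l - pbh y' l))
  (Num.max (mxsup (pAn y - pAn y'))
           `|pbn y - pbn y'|)))).

Definition pnorm (d W n : nat) (y : params d W n) : R :=
  Num.max (mxsup (pA0 y))
  (Num.max (mxsup (pb0 y))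
  (Num.max (\big[Num.max/0]_(l < n.-1) mxsup (pAh y l))
  (Num.max (\big[Num.max/0]_(l < n.-1) mxsup (pbh y l))
  (Num.max (mxsup (pAn y)) `|pbn y|)))).

Definition relu (W : nat) (v : 'cV[R]_W) : 'cV[R]_W :=
  \col_i Num.max (v i 0) 0.

Definition realize (d W n : nat) (y : params d W n) (x : 'cV[R]_d) : R :=
  let h0 := relu (pA0 y *m x + pb0 y) in
  let h := foldl (fun h l => relu (pAh y l *m h + pbh y l)) h0 (enum 'I_n.-1) in
  (pAn y *m h) 0 0 + pbn y.

Definition in_cube (d : nat) (x : 'cV[R]_d) : Prop :=
  forall i, 0 <= x i 0 <= 1.

End NN.

From HB Require Import structures.
From mathcomp Require Import all_boot all_order all_algebra.
From mathcomp Require Import reals.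
From mathcomp Require Import lra.

(* Compare the hidden states h_j, h'_j of the networks y, y' in the sup norm of
   the entries.  With M = d + 2 and e = |y - y'| one has |h_j| + 1 <= M W^j and
   |h_j - h'_j| <= M (j + 1) W^j e: an affine map with entries in [-1, 1]
   multiplies the sup norm by at most its input dimension, the identity
   A h - A' h' = (A - A') h + A' (h - h') splits the gap into a parameter part
   and a propagated part, and ReLU is 1-Lipschitz.  The output layer then gives
   M (n + 1) W^n e <= 2 M n W^n e. *)

Set Implicit Arguments.
Unset Strict Implicit.
Unset Printing Implicit Defensive.
Import Order.TTheory GRing.Theory Num.Theory.
Local Open Scope ring_scope.

Section MxSup.
Variable R : realType.

Lemma mxsup_ge0 p q (A : 'M[R]_(p, q)) : 0 <= mxsup A.
Proof.
have max_ge0 (x y : R) : 0 <= x -> 0 <= y -> 0 <= Num.max x y.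
  by move=> x0 _; rewrite le_max x0.
by apply: (big_ind (>= 0%R)) => // i _; apply: (big_ind (>= 0%R)).
Qed.

Lemma le_mxsup p q (A : 'M[R]_(p, q)) i j : `|A i j| <= mxsup A.
Proof.
apply: le_trans (le_bigmax _ (fun i => \big[Num.max/0]_(j < q) `|A i j|) i).
exact: (le_bigmax _ (fun j => `|A i j|) j).
Qed.

Lemma mxsup_le p q (A : 'M[R]_(p, q)) B :
  0 <= B -> (forall i j, `|A i j| <= B) -> mxsup A <= B.
Proof. by move=> B0 AB; apply: bigmax_le => // i _; apply: bigmax_le. Qed.

Lemma mxsupD p q (A B : 'M[R]_(p, q)) : mxsup (A + B) <= mxsup A + mxsup B.
Proof.
apply: mxsup_le => [|i j]; first by rewrite addr_ge0 ?mxsup_ge0.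
by rewrite mxE (le_trans (ler_normD _ _)) // lerD ?le_mxsup.
Qed.

Lemma mxsupM p q r (A : 'M[R]_(p, q)) (B : 'M[R]_(q, r)) :
  mxsup (A *m B) <= q%:R * (mxsup A * mxsup B).
Proof.
apply: mxsup_le => [|i j]; first by rewrite !mulr_ge0 ?mxsup_ge0.
rewrite mxE (le_trans (ler_norm_sum _ _ _)) //.
rewrite -[q in q%:R]card_ord mulr_natl -sumr_const; apply: ler_sum => k _.
by rewrite normrM ler_pM ?le_mxsup.
Qed.

Lemma mxsup_affine p q r (A : 'M[R]_(p, q)) (h : 'M[R]_(q, r)) b :
  mxsup (A *m h + b) <= q%:R * (mxsup A * mxsup h) + mxsup b.
Proof. by rewrite (le_trans (mxsupD _ _)) // lerD2r mxsupM. Qed.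

Lemma mxsup_affineB p q r (A A' : 'M[R]_(p, q)) (h h' : 'M[R]_(q, r)) b b' :
  mxsup (A *m h + b - (A' *m h' + b')) <=
  q%:R * (mxsup (A - A') * mxsup h + mxsup A' * mxsup (h - h')) + mxsup (b - b').
Proof.
have -> : A *m h + b - (A' *m h' + b') =
    (A - A') *m h + A' *m (h - h') + (b - b').
  by rewrite mulmxBl mulmxBr subrKA opprD addrACA.
rewrite (le_trans (mxsupD _ _)) // lerD2r mulrDr.
by rewrite (le_trans (mxsupD _ _)) // lerD ?mxsupM.
Qed.

Lemma norm_max0 (u : R) : `|Num.max u 0| <= `|u|.
Proof. by case: (leP u 0); rewrite ?normr0. Qed.

Lemma norm_max0B (u u' : R) : `|Num.max u 0 - Num.max u' 0| <= `|u - u'|.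
Proof.
have le_uu' := ler_norm (u - u').
have le_u'u : u' - u <= `|u - u'| by rewrite distrC ler_norm.
by case: (leP u 0); case: (leP u' 0) => *; rewrite ler_norml; apply/andP; split; lra.
Qed.

Lemma mxsup0 p q : mxsup (0 : 'M[R]_(p, q)) = 0.
Proof.
apply/le_anti; rewrite mxsup_ge0 andbT.
by apply: mxsup_le => // i j; rewrite mxE normr0.
Qed.

Lemma mxsup_const_mxB p q (a b : R) :
  mxsup (const_mx a - const_mx b : 'M[R]_(p, q)) <= `|a - b|.
Proof. by apply: mxsup_le => // i j; rewrite !mxE. Qed.

Lemma mxsup_relu W (v : 'cV[R]_W) : mxsup (relu v) <= mxsup v.
Proof.
apply: mxsup_le => [|i j]; first exact: mxsup_ge0.
by rewrite mxE (le_trans (norm_max0 _)) ?le_mxsup.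
Qed.

Lemma mxsup_reluB W (v v' : 'cV[R]_W) :
  mxsup (relu v - relu v') <= mxsup (v - v').
Proof.
apply: mxsup_le => [|i j]; first exact: mxsup_ge0.
rewrite !mxE (le_trans (norm_max0B _ _)) //.
by have := le_mxsup (v - v') i 0; rewrite !mxE.
Qed.

Lemma in_cube_mxsup d (x : 'cV[R]_d) : in_cube x -> mxsup x <= 1.
Proof.
move=> x01; apply: mxsup_le => // i j; rewrite ord1.
by case/andP: (x01 i) => x0 x1; rewrite ger0_norm.
Qed.

End MxSup.

Lemma foldl2_invariant (T I : Type) (P : nat -> T -> T -> Prop) (f g : T -> I -> T) :
  (forall j l h h', P j h h' -> P j.+1 (f h l) (g h' l)) ->
  forall s j h h', P j h h' -> P (j + size s)%N (foldl f h s) (foldl g h' s).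
Proof.
move=> step; elim=> [|l s IH] j h h' Pj; first by rewrite addn0.
by rewrite /= addnS -addSn; apply/IH/step.
Qed.

Section LayerInvariant.
Variables (R : realType) (W : nat) (M e : R).

(* The [+ 1] is the slack that absorbs the bias of the next layer, as [W >= 2]. *)
Definition layer_inv p j (h h' : 'cV[R]_p) :=
  mxsup h + 1 <= M * W%:R ^+ j /\ mxsup (h - h') <= M * j.+1%:R * W%:R ^+ j * e.

Lemma layer_inv_relu p j (h h' : 'cV[R]_p) :
  layer_inv j h h' -> layer_inv j (relu h) (relu h').
Proof.
case=> h_le dh_le; split; first by rewrite (le_trans _ h_le) // lerD2r mxsup_relu.
exact: le_trans (mxsup_reluB _ _) dh_le.
Qed.

Lemma layer_inv_input d p (A A' : 'M[R]_(p, d)) (b b' : 'cV[R]_p) x :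
  0 <= e -> d%:R + 2 <= M -> mxsup x <= 1 -> mxsup A <= 1 -> mxsup b <= 1 ->
  mxsup (A - A') <= e -> mxsup (b - b') <= e ->
  layer_inv 0 (A *m x + b) (A' *m x + b').
Proof.
move=> e_ge0 dM x1 A1 b1 dA db; rewrite /layer_inv expr0 !mulr1; split.
  have Ax1 : mxsup A * mxsup x <= 1 by rewrite mulr_ile1 ?mxsup_ge0.
  have := ler_wpM2l (ler0n R d) Ax1; have := mxsup_affine A x b; lra.
have dAx : d%:R * (mxsup (A - A') * mxsup x) <= d%:R * e.
  by rewrite ler_wpM2l // (le_trans (ler_piMr (mxsup_ge0 _) x1)).
have Me : (d%:R + 2) * e <= M * e by rewrite ler_wpM2r.
have := mxsup_affineB A A' x x b b'; rewrite subrr mxsup0 mulr0 addr0; lra.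
Qed.

Lemma layer_inv_affine_dist p (A A' : 'M[R]_(p, W)) (b b' : 'cV[R]_p) j h h' :
  (0 < W)%N -> 0 <= e ->
  mxsup A' <= 1 -> mxsup (A - A') <= e -> mxsup (b - b') <= e ->
  layer_inv j h h' ->
  mxsup (A *m h + b - (A' *m h' + b')) <= M * j.+2%:R * W%:R ^+ j.+1 * e.
Proof.
move=> W_gt0 e_ge0 A'1 dA db [h_le dh_le].
have W1 : 1 <= W%:R :> R by rewrite (ler_nat R 1 W).
set X := W%:R ^+ j in h_le dh_le *.
have dAh : mxsup (A - A') * mxsup h <= e * (M * X - 1).
  by rewrite ler_pM ?mxsup_ge0 //; lra.
have A'dh : mxsup A' * mxsup (h - h') <= M * j.+1%:R * X * e.
  exact: le_trans (ler_piMl (mxsup_ge0 _) A'1) dh_le.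
have WdAh : W%:R * (mxsup (A - A') * mxsup h + mxsup A' * mxsup (h - h')) <=
            W%:R * (e * (M * X - 1) + M * j.+1%:R * X * e).
  by rewrite ler_wpM2l ?lerD //; lra.
have We : e <= W%:R * e by rewrite ler_peMl.
have := mxsup_affineB A A' h h' b b'; rewrite exprS -/X -[j.+2%:R]natr1; lra.
Qed.

Lemma layer_inv_affine p (A A' : 'M[R]_(p, W)) (b b' : 'cV[R]_p) j h h' :
  (2 <= W)%N -> 0 <= e ->
  mxsup A <= 1 -> mxsup A' <= 1 -> mxsup b <= 1 ->
  mxsup (A - A') <= e -> mxsup (b - b') <= e ->
  layer_inv j h h' -> layer_inv j.+1 (A *m h + b) (A' *m h' + b').
Proof.
move=> W_ge2 e_ge0 A1 A'1 b1 dA db inv_j; split; last first.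
  exact: layer_inv_affine_dist (ltnW W_ge2) e_ge0 A'1 dA db inv_j.
have W2 : 2 <= W%:R :> R by rewrite (ler_nat R 2 W).
case: inv_j => h_le _; set X := W%:R ^+ j in h_le *.
have WAh : W%:R * (mxsup A * mxsup h) <= W%:R * (M * X - 1).
  rewrite ler_wpM2l ?(le_trans (ler_piMl (mxsup_ge0 _) A1)) //; lra.
have := mxsup_affine A h b; rewrite exprS -/X; lra.
Qed.

End LayerInvariant.

Section Network.
Variable R : realType.

Definition hidden d W n (y : params R d W n) (x : 'cV[R]_d) : 'cV[R]_W :=
  foldl (fun h l => relu (pAh y l *m h + pbh y l))
        (relu (pA0 y *m x + pb0 y)) (enum 'I_n.-1).

Lemma realizeB d W n (y y' : params R d W n) x :
  realize y x - realize y' x =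
  (pAn y *m hidden y x + const_mx (pbn y)
   - (pAn y' *m hidden y' x + const_mx (pbn y'))) 0 0.
Proof. by rewrite /realize /hidden !mxE. Qed.

Lemma pnorm_le1 d W n (y : params R d W n) : pnorm y <= 1 ->
  [/\ mxsup (pA0 y) <= 1, mxsup (pb0 y) <= 1, forall l, mxsup (pAh y l) <= 1,
      forall l, mxsup (pbh y l) <= 1 & mxsup (pAn y) <= 1].
Proof.
move=> y1; split=> [||l|l|]; apply: le_trans y1; rewrite /pnorm !le_max.
- by rewrite lexx.
- by rewrite lexx orbT.
- by rewrite (le_bigmax 0 (fun l => mxsup (pAh y l)) l) !orbT.
- by rewrite (le_bigmax 0 (fun l => mxsup (pbh y l)) l) !orbT.
- by rewrite lexx !orbT.
Qed.

Lemma pdist_mxsup d W n (y y' : params R d W n) :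
  [/\ mxsup (pA0 y - pA0 y') <= pdist y y', mxsup (pb0 y - pb0 y') <= pdist y y',
      forall l, mxsup (pAh y l - pAh y' l) <= pdist y y',
      forall l, mxsup (pbh y l - pbh y' l) <= pdist y y'
    & mxsup (pAn y - pAn y') <= pdist y y'].
Proof.
split=> [||l|l|]; rewrite /pdist !le_max.
- by rewrite lexx.
- by rewrite lexx orbT.
- by rewrite (le_bigmax 0 (fun l => mxsup (pAh y l - pAh y' l)) l) !orbT.
- by rewrite (le_bigmax 0 (fun l => mxsup (pbh y l - pbh y' l)) l) !orbT.
- by rewrite lexx !orbT.
Qed.

Lemma pdist_bn d W n (y y' : params R d W n) : `|pbn y - pbn y'| <= pdist y y'.
Proof. by rewrite /pdist !le_max lexx !orbT. Qed.

End Network.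

Theorem theorem7p1 (R : realType) (d : nat) (hd : (1 <= d)%N) :
  exists C' : R, forall (W n : nat), (2 <= W)%N -> (1 <= n)%N ->
    forall y y' : params R d W n, pnorm y <= 1 -> pnorm y' <= 1 ->
    forall x : 'cV[R]_d, in_cube x ->
      `|realize y x - realize y' x| <= C' * n%:R * W%:R ^+ n * pdist y y'.
Proof.
set M : R := d%:R + 2; exists (2 * M) => W [//|k] W_ge2 _ y y'.
move=> /pnorm_le1[A0 b0 Ah bh _] /pnorm_le1[_ _ Ah' _ An'] x /in_cube_mxsup x1.
have [dA0 db0 dAh dbh dAn] := pdist_mxsup y y'.
have dbn := pdist_bn y y'; set e := pdist y y' in dA0 db0 dAh dbh dAn dbn *.
have e_ge0 : 0 <= e := le_trans (normr_ge0 _) dbn.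
have inv_input : layer_inv W M e 0
    (relu (pA0 y *m x + pb0 y)) (relu (pA0 y' *m x + pb0 y')).
  exact/layer_inv_relu/layer_inv_input.
have inv_step j l (h h' : 'cV[R]_W) : layer_inv W M e j h h' ->
    layer_inv W M e j.+1 (relu (pAh y l *m h + pbh y l))
                         (relu (pAh y' l *m h' + pbh y' l)).
  move/(layer_inv_affine W_ge2 e_ge0 (Ah l) (Ah' l) (bh l) (dAh l) (dbh l)).
  exact: layer_inv_relu.
have := foldl2_invariant inv_step (enum 'I_k) inv_input.
rewrite add0n size_enum_ord => inv_hidden.
have := layer_inv_affine_dist (ltnW W_ge2) e_ge0 An' dAn
  (le_trans (mxsup_const_mxB _ _ _ _) dbn) inv_hidden.
rewrite realizeB => /(le_trans (le_mxsup _ 0 0)) /le_trans; apply.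
have M_ge0 : 0 <= M by rewrite addr_ge0.
rewrite ler_wpM2r ?ler_wpM2r ?exprn_ge0 // [M * _]mulrC mulrAC ler_wpM2r //.
by rewrite -natrM ler_nat mul2n -addnn addnS ltnS leq_addr.
Qed.
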